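(* Let $G$ be a fullerene graph and $S$ a perfect star packing of $G$. Then each hexagonal face of $G$ contains at most two vertices of $C(S)$. Moreover, if a hexagonal face $h$ contains two vertices of $C(S)$, then these two vertices are antipodal on $h$ (i.e. at distance $3$ along the $6$-cycle $h$).
   Context: A fullerene graph is a finite simple connected (equivalently, $3$-connected) plane cubic graph all of whose faces are pentagons or hexagons. A perfect star packing of $G$ is a spanning subgraph $S$ of $G$ every connected component of which is isomorphic to $K_{1,3}$; $C(S)$ denotes the set of centers (degree-$3$ vertices) of the stars in $S$. *)

From mathcomp Require Import all_boot all_fingroup.
Set Implicit Arguments. Unset Strict Implicit. Unset Printing Implicit Defensive.

(* A plane graph is encoded as a combinatorial map (rotation system) on a
   finite set of darts D:
   - alpha : the edge involution (a dart and its reverse),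
   - sigma : the rotation of darts around their tail vertex,
   - node  : maps each dart to its tail vertex; vertices = sigma-orbits,
   - faces = orbits of  face_perm d := sigma (alpha d); the face boundary
     walk starting at dart d visits the vertices node (iter k face_perm d). *)

Section Map.
Variables (V D : finType) (node : D -> V) (alpha sigma : {perm D}).

Definition face_perm (d : D) : D := sigma (alpha d).

Definition adjG : rel V :=
  fun u v => [exists d, (node d == u) && (node (alpha d) == v)].

Definition fullerene : Prop :=
      (forall d, alpha (alpha d) = d) /\ (forall d, alpha d != d) /\
      (forall v, exists d, node d = v) /\
      (forall d d', node d = node d' <-> fconnect sigma d d') /\
      (* simple: no loops, no multiple edges *)
      (forall d, node (alpha d) != node d) /\
      (forall d d', node d = node d' -> node (alpha d) = node (alpha d') -> d = d') /\
      (forall d, fingraph.order sigma d = 3) /\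
      (forall u v, connect adjG u v) /\
      (* plane: Euler characteristic 2, i.e. V - E + F = 2 with E = |D|/2 *)
      #|V| + fcard face_perm (predT : {pred D}) = (#|D|./2 + 2)%N /\
      (forall d, fingraph.order face_perm d = 5 \/ fingraph.order face_perm d = 6).

End Map.

(* A perfect star packing of a graph with adjacency adj is a spanning subgraph,
   given by its (symmetric) edge relation F, every connected component of
   which is isomorphic to K_{1,3}. *)
Definition perfect_star_packing (V : finType) (adj F : rel V) : Prop :=
  [/\ (forall u v, F u v -> adj u v),
      (forall u v, F u v = F v u) &
      (forall x, exists c a b e,
          [/\ uniq [:: c; a; b; e],
              [set y | connect F x y] = [set c; a; b; e] &
              (forall u w, u \in [set c; a; b; e] -> w \in [set c; a; b; e] ->
                 F u w = ((u == c) && (w \in [set a; b; e]))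
                         || ((w == c) && (u \in [set a; b; e])))])].

Definition centers (V : finType) (F : rel V) : {set V} :=
  [set v | #|[set w | F v w]| == 3].

From mathcomp Require Import all_boot all_fingroup.
From mathcomp Require Import zify.

Set Implicit Arguments.
Unset Strict Implicit.
Unset Printing Implicit Defensive.

(* In a perfect star packing of a cubic graph a centre has degree 3 in its
   star, so all of its neighbours lie in its star.  Hence two distinct centres
   are at distance at least 3, since a star has only one centre.  On a
   hexagonal face two distinct vertices at cyclic distance at least 3 are
   antipodal, and a vertex has only one antipode, so the face carries at most
   two centres. *)

Lemma card_le2_of_others_eq (T : finType) (A : {set T}) :
    (forall x y z, x \in A -> y \in A -> z \in A -> y != x -> z != x -> y = z) ->
  #|A| <= 2.
Proof.
move=> others_eq; have [->|[x xA]] := set_0Vmem A; first by rewrite cards0.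
rewrite (cardsD1 x) xA ltnS; apply/card_le1_eqP => y z.
by case/setD1P=> yx yA /setD1P[zx zA]; apply: others_eq xA zA yA zx yx.
Qed.

Section Hexagon.
Variables (T : finType) (A : {set T}) (u : nat -> T).
Hypothesis u_periodic : forall k, u (k + 6) = u k.
Hypothesis A_close :
  forall k m, 0 < m <= 2 -> u k \in A -> u (k + m) \in A -> u k = u (k + m).

Lemma hexagon_antipodal (i j : 'I_6) :
  u i \in A -> u j \in A -> u i != u j -> j = (i + 3) %% 6 :> nat.
Proof.
wlog le_ij : i j / i <= j.
  move=> wlog Ai Aj; have [le_ij|lt_ji] := leqP i j; first exact: wlog.
  rewrite eq_sym => neq_ij; have := wlog j i (ltnW lt_ji) Aj Ai neq_ij.
  by have := ltn_ord i; lia.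
move=> Ai Aj neq_ij.
have [m Ej] : exists m, j = i + m :> nat by exists (j - i); rewrite subnKC.
have lt_m6 : m < 6 by have := ltn_ord j; lia.
have close n : 0 < n <= 2 -> m = n -> u i = u j.
  move=> n_small mn; rewrite Ej mn; apply: A_close => //.
  by rewrite -mn -Ej.
have back_close n : 0 < n <= 2 -> m + n = 6 -> u i = u j.
  move=> n_small mn6; have period_j : u (j + n) = u i.
    by rewrite Ej -addnA mn6 u_periodic.
  by rewrite -period_j; apply/esym/A_close; rewrite ?period_j.
case: m Ej lt_m6 close back_close
  => [|[|[|[|[|[|m]]]]]] // Ej _ close back_close.
- by rewrite Ej addn0 eqxx in neq_ij.
- by rewrite (close 1) ?eqxx in neq_ij.
- by rewrite (close 2) ?eqxx in neq_ij.
- by rewrite Ej modn_small -?Ej.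
- by rewrite (back_close 2) ?eqxx in neq_ij.
- by rewrite (back_close 1) ?eqxx in neq_ij.
Qed.

End Hexagon.

Section StarPacking.
Variables (V D : finType) (node : D -> V) (alpha sigma : {perm D}).
Hypothesis HG : fullerene node alpha sigma.
Local Notation adj := (adjG node alpha).

Lemma node_sigma x : node (sigma x) = node x.
Proof.
have [_ [_ [_ [node_orbit _]]]] := HG.
by symmetry; apply/node_orbit/fconnect1.
Qed.

Lemma adjG_sym u v : adj u v -> adj v u.
Proof.
have [alphaK _] := HG.
case/existsP=> x /andP[/eqP xu /eqP xv]; apply/existsP; exists (alpha x).
by rewrite alphaK xu xv !eqxx.
Qed.

Lemma adjG_face_perm x : adj (node x) (node (face_perm alpha sigma x)).
Proof. by apply/existsP; exists x; rewrite /face_perm node_sigma !eqxx. Qed.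

Lemma card_adjG_le3 v : #|[set w | adj v w]| <= 3.
Proof.
have [_ [_ [node_onto [node_orbit [_ [_ [cubic _]]]]]]] := HG.
have [x xv] := node_onto v.
have nbr_sub :
    [set w | adj v w] \subset [set node (alpha y) | y in fconnect sigma x].
  apply/subsetP=> w; rewrite inE => /existsP[y /andP[/eqP yv /eqP yw]].
  by apply/imsetP; exists y; rewrite // inE -node_orbit xv yv.
apply: leq_trans (subset_leq_card nbr_sub) _.
by rewrite -(cubic x); apply: leq_imset_card.
Qed.

Variable F : rel V.
Hypothesis HS : perfect_star_packing adj F.

Lemma adjG_center_F c w : c \in centers F -> adj c w -> F c w.
Proof.
have [F_adj _ _] := HS.
rewrite inE => /eqP degF3 cw.
have F_sub : [set w | F c w] \subset [set w | adj c w].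
  by apply/subsetP=> w'; rewrite !inE; apply: F_adj.
have card_eq : #|[set w | F c w]| = #|[set w | adj c w]|.
  by apply/eqP; rewrite eqn_leq subset_leq_card // degF3 card_adjG_le3.
by have := subset_cardP card_eq F_sub w; rewrite !inE cw.
Qed.

Lemma connect_centers_eq c1 c2 :
  c1 \in centers F -> c2 \in centers F -> connect F c1 c2 -> c1 = c2.
Proof.
have [_ _ star] := HS.
have [c [a [b [e [_ comp star_F]]]]] := star c1.
suff center_eq v : v \in centers F -> connect F c1 v -> v = c.
  move=> C1 C2 c12.
  by rewrite (center_eq c1 C1 (connect0 _ _)) (center_eq c2 C2 c12).
move=> /[!inE] /eqP degF3 c1v; apply/eqP/negPn/negP => vNc.
have v_comp : v \in [set c; a; b; e] by rewrite -comp inE.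
have leaf_nbrs : [set w | F v w] \subset [set c].
  apply/subsetP=> w; rewrite inE => vw.
  have w_comp : w \in [set c; a; b; e].
    by rewrite -comp inE (connect_trans c1v (connect1 vw)).
  move: (star_F v w v_comp w_comp); rewrite vw (negbTE vNc) /=.
  by case/esym/andP=> /eqP -> _; rewrite inE.
by have := subset_leq_card leaf_nbrs; rewrite degF3 cards1.
Qed.

Lemma centers_adj_eq c1 c2 :
  c1 \in centers F -> c2 \in centers F -> adj c1 c2 -> c1 = c2.
Proof.
move=> C1 C2 c12.
exact: connect_centers_eq C1 C2 (connect1 (adjG_center_F C1 c12)).
Qed.

Lemma centers_adj2_eq c1 v c2 :
  c1 \in centers F -> c2 \in centers F -> adj c1 v -> adj v c2 -> c1 = c2.
Proof.
have [_ F_sym _] := HS.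
move=> C1 C2 c1v vc2; apply: (connect_centers_eq C1 C2).
have vc2_F : F v c2 by rewrite F_sym (adjG_center_F C2 (adjG_sym vc2)).
exact: connect_trans (connect1 (adjG_center_F C1 c1v)) (connect1 vc2_F).
Qed.

End StarPacking.

Theorem mainTheorem4 (V D : finType) (node : D -> V) (alpha sigma : {perm D})
  (HG : fullerene node alpha sigma)
  (F : rel V) (HS : perfect_star_packing (adjG node alpha) F)
  (d : D) (Hhex : fingraph.order (face_perm alpha sigma) d = 6) :
  #|[set node (iter k (face_perm alpha sigma) d) | k : 'I_6] :&: centers F| <= 2
  /\ (forall i j : 'I_6,
        node (iter i (face_perm alpha sigma) d) \in centers F ->
        node (iter j (face_perm alpha sigma) d) \in centers F ->
        node (iter i (face_perm alpha sigma) d) != node (iter j (face_perm alpha sigma) d) ->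
        j = (i + 3) %% 6 :> nat).
Proof.
set f := face_perm alpha sigma; set u := fun k => node (iter k f d).
have u_periodic k : u (k + 6) = u k.
  by rewrite /u iterD -Hhex iter_order //; apply/inj_comp/perm_inj/perm_inj.
have u_adj k : adjG node alpha (u k) (u k.+1).
  by rewrite /u iterS; apply: adjG_face_perm.
have centers_close k m : 0 < m <= 2 ->
    u k \in centers F -> u (k + m) \in centers F -> u k = u (k + m).
  case: m => [|[|[|m]]] // _ Ck; rewrite ?addn1 ?addn2 => Ck'.
  - exact: (centers_adj_eq HG HS Ck Ck' (u_adj k)).
  - exact: (centers_adj2_eq HG HS Ck Ck' (u_adj k) (u_adj k.+1)).
have antipodal := hexagon_antipodal u_periodic centers_close.
split; last exact: antipodal.
apply: card_le2_of_others_eq => x y z.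
move=> /setIP[/imsetP[i _ ->] Ci] /setIP[/imsetP[j _ ->] Cj].
move=> /setIP[/imsetP[l _ ->] Cl].
rewrite eq_sym => neq_ij; rewrite eq_sym => neq_il.
suff -> : j = l by [].
have Ej := antipodal i j Ci Cj neq_ij.
have El := antipodal i l Ci Cl neq_il.
by apply: ord_inj; rewrite Ej El.
Qed.
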